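(* For all $n\in\mathbb N$ the following hold in the $q$-shuffle algebra $\mathbb V$: $$W_{-n}=\sum_{i=0}^n(-1)^iq^i(xC_i)\star\tilde G_{n-i}=\sum_{i=0}^n(-1)^iq^{-i}\tilde G_{n-i}\star(xC_i),$$ $$W_{n+1}=\sum_{i=0}^n(-1)^iq^i\tilde G_{n-i}\star(C_iy)=\sum_{i=0}^n(-1)^iq^{-i}(C_iy)\star\tilde G_{n-i}.$$ Here $xC_i$ and $C_iy$ are concatenation products.
   Context: Let $\mathbb F$ be a field and let $q\in\mathbb F$ be nonzero and not a root of unity. Let $[m]_q=(q^m-q^{-m})/(q-q^{-1})$. Let $\mathbb V$ be the free associative $\mathbb F$-algebra on noncommuting $x,y$, with basis the words (including $1$). Juxtaposition denotes concatenation. Set $\langle x,x\rangle=\langle y,y\rangle=2$ and $\langle x,y\rangle=\langle y,x\rangle=-2$. The $q$-shuffle product $\star$ is the bilinear product determined as follows: - $1\star v=v\star 1=v$; - for nontrivial words $u=u_1\cdots u_r$ and $v=v_1\cdots v_s$, $$u\star v=u_1((u_2\cdots u_r)\star v)+v_1(u\star(v_2\cdots v_s))q^{\langle u_1,v_1\rangle+\cdots+\langle u_r,v_1\rangle}.$$ This makes $\mathbb V$ an associative algebra, the $q$-shuffle algebra. For $k\in\mathbb N$: - $W_{-k}=xyx\cdots x$ is the alternating word of length $2k+1$ beginning and ending with $x$; - $W_{k+1}=yxy\cdots y$ is the alternating word of length $2k+1$ beginning and ending with $y$; - $\tilde G_k=xyxy\cdots xy$ is the word of length $2k$, with $\tilde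 G_0=1$. Let $\overline x=1$ and $\overline y=-1$. A word $v_1\cdots v_m$ is Catalan if $\overline v_1+\cdots+\overline v_i\ge0$ for $1\le i\le m-1$ and $\overline v_1+\cdots+\overline v_m=0$. For $n\in\mathbb N$, $$C_n=\sum v_1\cdots v_{2n}\,[1]_q[1+\overline v_1]_q\cdots[1+\overline v_1+\cdots+\overline v_{2n}]_q,$$ where the sum is over all Catalan words of length $2n$ (so $C_0=1$). *)

From HB Require Import structures.
From mathcomp Require Import all_boot all_order all_algebra.
Set Implicit Arguments. Unset Strict Implicit. Unset Printing Implicit Defensive.
Import Order.TTheory GRing.Theory Num.Theory.
Local Open Scope ring_scope.

(* Letters: x = true, y = false.  Words are sequences of letters; the empty
   word [::] is the unit 1.  An element of the free algebra V over F is
   represented by a formal linear combination (a finite list of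
   (coefficient, word) pairs); two representations denote the same element
   of V iff they have the same coefficient function [vcoef]. *)
Definition word := seq bool.
Definition V (F : fieldType) := seq (F * word).

Section QShuffle.
Variable F : fieldType.
Variable q : F.

Definition vcoef (v : V F) (w : word) : F :=
  \sum_(p <- v) (if p.2 == w then p.1 else 0).

Definition veq (u v : V F) : Prop := forall w, vcoef u w = vcoef v w.

Definition vword (w : word) : V F := [:: (1, w)].
Definition vscale (c : F) (v : V F) : V F := [seq (c * p.1, p.2) | p <- v].
Definition vadd (u v : V F) : V F := u ++ v.
Definition vcat (u v : V F) : V F :=
  [seq (a.1 * b.1, a.2 ++ b.2) | a <- u, b <- v].

Definition lform (a b : bool) : int := if a == b then 2 else -2.

Fixpoint shw (u v : word) {struct u} : V F :=
  let fix shv (v : word) : V F :=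
    match u, v with
    | [::], _ => [:: (1, v)]
    | _, [::] => [:: (1, u)]
    | a :: u', b :: v' =>
        [seq (p.1, a :: p.2) | p <- shw u' v] ++
        [seq (p.1 * q ^ (\sum_(c <- u) lform c b), b :: p.2) | p <- shv v']
    end in shv v.

Definition vshuffle (U W : V F) : V F :=
  flatten [seq [seq (a.1 * b.1 * e.1, e.2) | e <- shw a.2 b.2]
          | a <- U, b <- W].

Definition qint (m : int) : F := (q ^ m - q ^ (- m)) / (q - q^-1).

Definition lbar (a : bool) : int := if a then 1 else -1.
Definition psum (w : word) : int := \sum_(a <- w) lbar a.

Definition catalan (w : word) : bool :=
  all (fun i => 0 <= psum (take i w)) (iota 1 (size w).-1) && (psum w == 0).

Fixpoint words (m : nat) : seq word :=
  if m is m'.+1 then [seq b :: w | b <- [:: true; false], w <- words m']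
  else [:: [::]].

Definition catcoef (w : word) : F :=
  \prod_(i < (size w).+1) qint (1 + psum (take i w)).

Definition Cn (n : nat) : V F :=
  [seq (catcoef w, w) | w <- words (2 * n) & catalan w].

(* W_{-k} = xyx...x (length 2k+1), W_{k+1} = yxy...y, G~_k = xyxy...xy (length 2k) *)
Definition Wneg (k : nat) : word := mkseq (fun i => ~~ odd i) (2 * k).+1.
Definition Wpos (k : nat) : word := mkseq (fun i => odd i) (2 * k).+1.
Definition Gt (k : nat) : word := mkseq (fun i => ~~ odd i) (2 * k).

Definition vsum (n : nat) (f : nat -> V F) : V F :=
  \big[vadd/[::]]_(i < n) f i.

End QShuffle.

(* An element of V, and more generally an infinite formal sum of words, is
   identified with its coefficient function [word -> F].  The four identities
   are the homogeneous components of degree 2n+1 of four identities between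
   generating series:
     (x C(-q)) ⋆ G = W-,  G ⋆ (x C(-1/q)) = W-,  G ⋆ (C(-q) y) = W+,
     (C(-1/q) y) ⋆ G = W+,
   where C(s) = sum_i s^i C_i, G = sum_k G~_k, W- = sum_k W_{-k} and
   W+ = sum_k W_{k+1}.  The coefficient of a word a w in f ⋆ g only involves
   the left derivatives of f and g by a and a rescaling of f, so each series
   identity is proved by induction on the word.  The induction closes because
   C(s) is the height-0 member of a family C(s, h) of weighted lattice path
   series whose derivatives are multiples of C(s, h +- 1), and the
   derivatives of G, W- and W+ are again among G, W-, W+ and the sum of all
   (yx)^k. *)

From HB Require Import structures.
From mathcomp Require Import all_boot all_order all_algebra.
From mathcomp Require Import ring zify.
From Stdlib Require Import FunctionalExtensionality.
Import Order.TTheory GRing.Theory Num.Theory.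
Local Open Scope ring_scope.
Set Implicit Arguments. Unset Strict Implicit. Unset Printing Implicit Defensive.

Section Series.
Variable F : fieldType.
Variable q : F.

Definition series := word -> F.

Definition lder (a : bool) (f : series) : series := fun w => f (a :: w).
Definition lform_word (u : word) (b : bool) : int := \sum_(c <- u) lform c b.
Definition twist (b : bool) (f : series) : series := fun u => q ^ lform_word u b * f u.
Definition scalef (k : F) (f : series) : series := fun u => k * f u.
Definition dirac (u : word) : series := fun z => if u == z then 1 else 0.

(* The coefficient of [w] in [f ⋆ g]: by the recursive definition of ⋆, the
   first letter [a] of [w] comes either from a word of [f], or from a word of
   [g] at the cost of the factor q^<u,a>, u being the word of [f]. *)
Fixpoint shc (w : word) (f g : series) : F :=
  if w is a :: w' then shc w' (lder a f) g + shc w' (twist a f) (lder a g)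
  else f [::] * g [::].

Lemma shc_cons a w f g :
  shc (a :: w) f g = shc w (lder a f) g + shc w (twist a f) (lder a g).
Proof. by []. Qed.

Lemma twist0 a : twist a \0 = \0.
Proof. by apply: functional_extensionality => u; rewrite /twist /= mulr0. Qed.

Lemma lderZ a k f : lder a (scalef k f) = scalef k (lder a f).
Proof. by []. Qed.

Lemma twistZ a k f : twist a (scalef k f) = scalef k (twist a f).
Proof. by apply: functional_extensionality => u; rewrite /twist /scalef mulrCA. Qed.

Lemma shc0l w g : shc w \0 g = 0.
Proof.
elim: w g => [|a w IH] g /=; first by rewrite mul0r.
by rewrite twist0 !IH addr0.
Qed.

Lemma shc0r w f : shc w f \0 = 0.
Proof.
elim: w f => [|a w IH] f /=; first by rewrite mulr0.
by rewrite !IH addr0.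
Qed.

Lemma shcZl w k f g : shc w (scalef k f) g = k * shc w f g.
Proof.
elim: w f g => [|a w IH] f g /=; first by rewrite /scalef mulrA.
by rewrite lderZ twistZ !IH mulrDr.
Qed.

Lemma shcZr w k f g : shc w f (scalef k g) = k * shc w f g.
Proof.
elim: w f g => [|a w IH] f g /=; first by rewrite /scalef mulrCA.
by rewrite lderZ !IH mulrDr.
Qed.

Lemma twist_sum (I : Type) (r : seq I) a (f : I -> series) :
  twist a (fun u => \sum_(i <- r) f i u) = fun u => \sum_(i <- r) twist a (f i) u.
Proof. by apply: functional_extensionality => u; rewrite /twist mulr_sumr. Qed.

Lemma shc_suml (I : Type) (r : seq I) (f : I -> series) w g :
  shc w (fun u => \sum_(i <- r) f i u) g = \sum_(i <- r) shc w (f i) g.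
Proof.
elim: w f g => [|a w IH] f g /=; first by rewrite mulr_suml.
by rewrite twist_sum !IH -big_split.
Qed.

Lemma shc_sumr (I : Type) (r : seq I) (g : I -> series) w f :
  shc w f (fun u => \sum_(i <- r) g i u) = \sum_(i <- r) shc w f (g i).
Proof.
elim: w f g => [|a w IH] f g /=; first by rewrite mulr_sumr.
by rewrite !IH -big_split.
Qed.

Lemma lform_word_nil b : lform_word [::] b = 0.
Proof. by rewrite /lform_word big_nil. Qed.

Lemma shc_dirac_nill w g : shc w (dirac [::]) g = g w.
Proof.
elim: w g => [|a w IH] g /=; first by rewrite mul1r.
have -> : twist a (dirac [::]) = dirac [::].
  apply: functional_extensionality => -[|c u];
    by rewrite /twist /dirac ?lform_word_nil ?expr0z ?mul1r ?mulr0.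
by rewrite (_ : lder a (dirac [::]) = \0) // shc0l add0r IH.
Qed.

Lemma shc_dirac_nilr w f : shc w f (dirac [::]) = f w.
Proof.
elim: w f => [|a w IH] f /=; first by rewrite mulr1.
by rewrite (_ : lder a (dirac [::]) = \0) // shc0r addr0 IH.
Qed.

End Series.

Section Representation.
Variable F : fieldType.
Variable q : F.

Lemma vcoef_nil w : vcoef ([::] : V F) w = 0.
Proof. by rewrite /vcoef big_nil. Qed.

Lemma vcoef_cat (s1 s2 : V F) w : vcoef (s1 ++ s2) w = vcoef s1 w + vcoef s2 w.
Proof. by rewrite /vcoef big_cat. Qed.

Lemma vcoef_flatten (L : seq (V F)) w :
  vcoef (flatten L) w = \sum_(l <- L) vcoef l w.
Proof.
elim: L => [|l L IH]; first by rewrite big_nil vcoef_nil.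
by rewrite /= vcoef_cat IH big_cons.
Qed.

Lemma vcoef_vword u : vcoef (vword F u) = dirac F u.
Proof.
apply: functional_extensionality => z.
by rewrite /vcoef /vword big_cons big_nil addr0.
Qed.

Lemma vcoefE (U : V F) : vcoef U = fun z => \sum_(a <- U) scalef a.1 (dirac F a.2) z.
Proof.
apply: functional_extensionality => z; apply: eq_bigr => p _.
by rewrite /scalef /dirac eq_sym; case: ifP; rewrite ?mulr1 ?mulr0.
Qed.

Lemma vcoef_scale (c : F) (v : V F) w : vcoef (vscale c v) w = c * vcoef v w.
Proof.
rewrite /vcoef big_map mulr_sumr; apply: eq_bigr => p _ /=.
by case: ifP; rewrite ?mulr0.
Qed.

Lemma vcoef_vsum n (f : nat -> V F) w :
  vcoef (vsum n f) w = \sum_(i < n) vcoef (f i) w.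
Proof.
rewrite /vsum; elim: (index_enum _) => [|i r IH]; first by rewrite !big_nil vcoef_nil.
by rewrite !big_cons /vadd vcoef_cat IH.
Qed.

Lemma vcoef_map_consr (s : V F) a (k : F) w :
  vcoef [seq (p.1 * k, a :: p.2) | p <- s] w =
  if w is c :: w' then if a == c then vcoef s w' * k else 0 else 0.
Proof.
rewrite /vcoef big_map; case: w => [|c w']; first by rewrite big1.
case: eqP => [<-|ne]; last by rewrite big1 // => p _; rewrite /= eqseq_cons; case: eqP.
rewrite mulr_suml; apply: eq_bigr => p _; rewrite /= eqseq_cons eqxx /=.
by case: ifP; rewrite ?mul0r.
Qed.

Lemma lder_dirac_cons c a u :
  lder c (dirac F (a :: u)) = if a == c then dirac F u else \0.
Proof.
apply: functional_extensionality => z; rewrite /lder /dirac eqseq_cons.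
by case: (a == c).
Qed.

Lemma twist_dirac c u : twist q c (dirac F u) = scalef (q ^ lform_word u c) (dirac F u).
Proof.
apply: functional_extensionality => z; rewrite /twist /scalef /dirac.
by case: eqP => [->|]; rewrite ?mulr0.
Qed.

Lemma vcoef_map_cons (s : V F) a w :
  vcoef [seq (p.1, a :: p.2) | p <- s] w =
  if w is c :: w' then if a == c then vcoef s w' else 0 else 0.
Proof.
rewrite (@eq_map _ _ _ (fun p => (p.1 * 1, a :: p.2))) => [|p]; last by rewrite mulr1.
by rewrite vcoef_map_consr; case: w => // c w; rewrite mulr1.
Qed.

Lemma shw_nill v : shw q [::] v = [:: (1, v)].
Proof. by case: v. Qed.

Lemma shw_cons a u b v : shw q (a :: u) (b :: v) =
  [seq (p.1, a :: p.2) | p <- shw q u (b :: v)] ++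
  [seq (p.1 * q ^ lform_word (a :: u) b, b :: p.2) | p <- shw q (a :: u) v].
Proof. by []. Qed.

Lemma vcoef_shw w u v : vcoef (shw q u v) w = shc q w (dirac F u) (dirac F v).
Proof.
elim: w u v => [|c w IH] [|a u] [|b v];
  try by rewrite ?shw_nill ?shc_dirac_nill ?shc_dirac_nilr -vcoef_vword.
  by rewrite shw_cons vcoef_cat vcoef_map_cons vcoef_map_consr /= /dirac mul0r addr0.
rewrite shw_cons vcoef_cat vcoef_map_cons vcoef_map_consr !IH.
rewrite shc_cons !lder_dirac_cons twist_dirac shcZl.
case: (a == c); last rewrite shc0l.
all: case: eqP => [<-|_]; last by rewrite shc0r ?mulr0.
all: by rewrite mulrC.
Qed.

Lemma vcoef_shuffle (U W : V F) w :
  vcoef (vshuffle q U W) w = shc q w (vcoef U) (vcoef W).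
Proof.
rewrite /vshuffle vcoef_flatten.
rewrite (big_allpairs_dep (op := +%R) (idx := 0)
   (h := fun a b => [seq (a.1 * b.1 * e.1, e.2) | e <- shw q a.2 b.2])
   (r2 := fun _ => W) (F := fun l => vcoef l w)) /=.
rewrite (vcoefE U) shc_suml; apply: eq_bigr => a _.
rewrite (vcoefE W) shc_sumr; apply: eq_bigr => b _.
rewrite -/(vscale (a.1 * b.1) (shw q a.2 b.2)) vcoef_scale vcoef_shw shcZl shcZr; ring.
Qed.

End Representation.

Section LetterProducts.
Variable F : fieldType.

Definition lmul (a : bool) (f : series F) : series F := fun z =>
  if z is c :: z' then if c == a then f z' else 0 else 0.
Definition rmul (b : bool) (f : series F) : series F := fun z =>
  if rev z is c :: r then if c == b then f (rev r) else 0 else 0.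

Lemma vcoef_vcat_allpairs (U W : V F) z :
  vcoef (vcat U W) z =
  \sum_(a <- U) \sum_(b <- W) (if a.2 ++ b.2 == z then a.1 * b.1 else 0).
Proof.
exact: (big_allpairs_dep (op := +%R) (idx := 0) (h := fun a b => (a.1 * b.1, a.2 ++ b.2))
  (r2 := fun _ => W) (F := fun p => if p.2 == z then p.1 else 0)).
Qed.

Lemma vcoef_letter_vcat a (U : V F) : vcoef (vcat (vword F [:: a]) U) = lmul a (vcoef U).
Proof.
apply: functional_extensionality => z.
rewrite vcoef_vcat_allpairs big_cons big_nil addr0 /lmul; case: z => [|c z] /=.
  by rewrite big1.
rewrite eq_sym; case: eqP => [->|ne].
  by apply: eq_bigr => p _; rewrite eqseq_cons eqxx mul1r.
by rewrite big1 // => p _; rewrite eqseq_cons; case: eqP.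
Qed.

Lemma vcoef_vcat_letter b (U : V F) : vcoef (vcat U (vword F [:: b])) = rmul b (vcoef U).
Proof.
apply: functional_extensionality => z.
rewrite vcoef_vcat_allpairs /rmul.
case/lastP: z => [|z c].
  by rewrite big1 // => p _; rewrite big_seq1 /= cats1; case: (p.2).
rewrite rev_rcons revK eq_sym; case: eqP => [->|ne].
  by apply: eq_bigr => p _; rewrite big_seq1 /= cats1 eqseq_rcons eqxx andbT mulr1.
by rewrite big1 // => p _; rewrite big_seq1 /= cats1 eqseq_rcons (introF eqP ne) andbF.
Qed.

End LetterProducts.

Section Families.
Variable F : fieldType.
Variable q : F.

Fixpoint alternating (a : bool) (w : word) : bool :=
  if w is c :: w' then (c == a) && alternating (~~ a) w' else true.

(* [alt a p] is the sum of all alternating words starting with [a] whose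
   length has parity [p]: [alt true false] is the sum of all G~_k, [alt true
   true] of all W_{-k}, and [alt false true] of all W_{k+1}. *)
Definition alt (a p : bool) : series F := fun w =>
  if alternating a w && (odd (size w) == p) then 1 else 0.

Definition qn (n : nat) : F := qint q n%:Z.

(* Reading [x] as an up-step and [y] as a down-step, [catser s h w] weighs a
   lattice path from height [h] to height 0 that stays nonnegative by [s] per
   down-step and by [[1 + h']_q] per step ending at height [h']; so
   [catser s 0] is the generating series sum_i s^i C_i. *)
Fixpoint catser (s : F) (h : nat) (w : word) : F :=
  match w with
  | [::] => (h == 0)%:R
  | true :: w' => qn h.+2 * catser s h.+1 w'
  | false :: w' => if h is h'.+1 then s * qn h * catser s h' w' else 0
  end.

Lemma alt_cons a p c w :
  alt a p (c :: w) = if c == a then alt (~~ a) (~~ p) w else 0.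
Proof.
rewrite /alt /=; case: (c == a) => //=.
by case: (alternating _ _) => //=; case: (odd _); case: p.
Qed.

Lemma lder_alt a p c : lder c (alt a p) = if c == a then alt (~~ a) (~~ p) else \0.
Proof.
by apply: functional_extensionality => z; rewrite /lder alt_cons; case: (c == a).
Qed.

Lemma lder_lmul a c (f : series F) : lder c (lmul a f) = if c == a then f else \0.
Proof. by apply: functional_extensionality => z; rewrite /lder /=; case: (c == a). Qed.

Lemma lderx_catser s h : lder true (catser s h) = scalef (qn h.+2) (catser s h.+1).
Proof. by []. Qed.

Lemma ldery_catser0 s : lder false (catser s 0) = \0.
Proof. by apply: functional_extensionality. Qed.

Lemma ldery_catserS s h : lder false (catser s h.+1) = scalef (s * qn h.+1) (catser s h).
Proof. by []. Qed.

Lemma rmulZ b k (f : series F) : rmul b (scalef k f) = scalef k (rmul b f).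
Proof.
apply: functional_extensionality => z; rewrite /rmul /scalef.
by case: (rev z) => [|c r]; rewrite ?mulr0 //; case: (c == b); rewrite ?mulr0.
Qed.

Lemma rmul0 b : rmul b \0 = \0 :> series F.
Proof.
apply: functional_extensionality => z; rewrite /rmul.
by case: (rev z) => [|c r] //; case: (c == b).
Qed.

Lemma lder_rmul c b (f : series F) z :
  lder c (rmul b f) z = rmul b (lder c f) z + (if (z == [::]) && (c == b) then f [::] else 0).
Proof.
rewrite /lder /rmul rev_cons.
case/lastP: z => [|z d]; first by rewrite add0r.
by rewrite rev_rcons rcons_cons rev_rcons (_ : rcons z d == [::] = false) ?addr0 //; case: z.
Qed.

Lemma lderx_Cy s h :
  lder true (rmul false (catser s h)) = scalef (qn h.+2) (rmul false (catser s h.+1)).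
Proof.
by apply: functional_extensionality => z; rewrite lder_rmul andbF addr0 rmulZ.
Qed.

Lemma ldery_Cy0 s : lder false (rmul false (catser s 0)) = dirac F [::].
Proof.
apply: functional_extensionality => z.
by rewrite lder_rmul ldery_catser0 rmul0 add0r /dirac andbT eq_sym.
Qed.

Lemma ldery_CyS s h :
  lder false (rmul false (catser s h.+1)) = scalef (s * qn h.+1) (rmul false (catser s h)).
Proof.
apply: functional_extensionality => z.
by rewrite lder_rmul ldery_catserS rmulZ /=; case: (z == [::]); rewrite addr0.
Qed.

End Families.

Section Twists.
Variable F : fieldType.
Variable q : F.

Local Notation Gsum := (alt F true false).
Local Notation Wpsum := (alt F false true).

Definition psum_homog (f : series F) (P : int) := forall u, f u != 0 -> psum u = P.

Lemma psum_nil : psum [::] = 0.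
Proof. by rewrite /psum big_nil. Qed.

Lemma psum_cons a u : psum (a :: u) = lbar a + psum u.
Proof. by rewrite /psum big_cons. Qed.

Lemma psum_rcons u a : psum (rcons u a) = psum u + lbar a.
Proof. by rewrite /psum -cats1 big_cat big_seq1. Qed.

Lemma lform_word_psum u b : lform_word u b = psum u * (if b then 2 else -2).
Proof.
rewrite /lform_word /psum big_distrl; apply: eq_bigr => c _.
by rewrite /lform /lbar; case: c; case: b.
Qed.

Lemma twist_psum_homog b f P : psum_homog f P ->
  twist q b f = scalef (q ^ (P * (if b then 2 else -2))) f.
Proof.
move=> hf; apply: functional_extensionality => u; rewrite /twist /scalef.
have [->|nz] := eqVneq (f u) 0; first by rewrite !mulr0.
by rewrite lform_word_psum (hf u nz).
Qed.

Lemma twist_psum_homog_nat b f (m : nat) : psum_homog f m ->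
  twist q b f = scalef (if b then q ^+ m * q ^+ m else (q ^+ m * q ^+ m)^-1) f.
Proof.
move/(twist_psum_homog b) => ->; rewrite -exprD; case: b.
  by rewrite (_ : (m%:Z * 2)%R = (m + m)%N); last lia.
by rewrite (_ : (m%:Z * -2)%R = - (m + m)%N%:Z) ?exprnN; last lia.
Qed.

Lemma twist_psum_homog_Nnat b f (m : nat) : psum_homog f (- m%:Z) ->
  twist q b f = scalef (if b then (q ^+ m * q ^+ m)^-1 else q ^+ m * q ^+ m) f.
Proof.
move/(twist_psum_homog b) => ->; rewrite -exprD; case: b.
  by rewrite (_ : (- m%:Z * 2)%R = - (m + m)%N%:Z) ?exprnN; last lia.
by rewrite (_ : (- m%:Z * -2)%R = (m + m)%N); last lia.
Qed.

Lemma psum_homog_alt a p : psum_homog (alt F a p) (if p then lbar a else 0).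
Proof.
move=> u; elim: u a p => [|c u IH] a p.
  by case: p => /=; [rewrite /alt eqxx | move=> _; rewrite psum_nil].
rewrite alt_cons psum_cons; have [->|_] := eqVneq c a; last by rewrite eqxx.
by move/IH => ->; case: a; case: p.
Qed.

Lemma psum_homog_catser s h : psum_homog (catser q s h) (- h%:Z).
Proof.
move=> u; elim: u h => [|[] u IH] h /=.
- by case: h => [|h] /=; [rewrite psum_nil | rewrite eqxx].
- move=> nz; rewrite psum_cons (IH h.+1) /lbar; first lia.
  by apply: contraNneq nz => ->; rewrite mulr0.
- case: h => [|h]; first by rewrite eqxx.
  move=> nz; rewrite psum_cons (IH h) /lbar; first lia.
  by apply: contraNneq nz => ->; rewrite mulr0.
Qed.

Lemma psum_homog_lmul a f P : psum_homog f P -> psum_homog (lmul a f) (lbar a + P).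
Proof.
move=> hf [|c u] /=; first by rewrite eqxx.
by have [->|_] := eqVneq c a; [move/hf <-; rewrite psum_cons | rewrite eqxx].
Qed.

Lemma psum_homog_rmul b f P : psum_homog f P -> psum_homog (rmul b f) (P + lbar b).
Proof.
move=> hf u; rewrite /rmul; case/lastP: u => [|u c]; first by rewrite eqxx.
rewrite rev_rcons revK; have [->|_] := eqVneq c b; last by rewrite eqxx.
by move/hf <-; rewrite psum_rcons.
Qed.

Lemma scalef1 (f : series F) : scalef 1 f = f.
Proof. by apply: functional_extensionality => u; rewrite /scalef mul1r. Qed.

Lemma twist_Gsum b : twist q b Gsum = Gsum.
Proof.
rewrite (twist_psum_homog_nat b (@psum_homog_alt true false)) !expr0 mulr1 invr1.
by case: b; rewrite scalef1.
Qed.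

Lemma twist_Wpsum b :
  twist q b Wpsum = scalef (if b then (q * q)^-1 else q * q) Wpsum.
Proof. by rewrite (twist_psum_homog_Nnat b (m := 1) (@psum_homog_alt false true)) expr1. Qed.

Lemma twist_catser b s h : twist q b (catser q s h) =
  scalef (if b then (q ^+ h * q ^+ h)^-1 else q ^+ h * q ^+ h) (catser q s h).
Proof. exact: twist_psum_homog_Nnat (@psum_homog_catser s h). Qed.

Lemma twist_xC b s : twist q b (lmul true (catser q s 0)) =
  scalef (if b then q * q else (q * q)^-1) (lmul true (catser q s 0)).
Proof.
have := @psum_homog_lmul true _ _ (@psum_homog_catser s 0).
by move/(twist_psum_homog_nat b (m := 1)) ->; rewrite expr1.
Qed.

Lemma twist_Cy b s h : twist q b (rmul false (catser q s h)) =
  scalef (if b then (q ^+ h.+1 * q ^+ h.+1)^-1 else q ^+ h.+1 * q ^+ h.+1)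
         (rmul false (catser q s h)).
Proof.
apply: twist_psum_homog_Nnat.
rewrite (_ : - h.+1%:Z = - h%:Z + lbar false); last by rewrite /lbar; lia.
exact/psum_homog_rmul/psum_homog_catser.
Qed.

End Twists.

Section GeneratingIdentities.
Variable F : fieldType.
Variable q : F.
Hypothesis q_neq0 : q != 0.
Hypothesis qq_neq1 : q * q - 1 != 0.

Local Notation Gsum := (alt F true false).
Local Notation Hsum := (alt F false false).
Local Notation Wnsum := (alt F true true).
Local Notation Wpsum := (alt F false true).
Local Notation shc := (shc q).
Local Notation catser := (catser q).

Lemma qnE n : qn q n = (q ^+ n - (q ^+ n)^-1) / (q - q^-1).
Proof. by rewrite /qn /qint exprnN. Qed.

Lemma eq_div_of_mul (a X Y : F) : a != 0 -> a * X = Y -> X = Y / a.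
Proof. by move=> a0 <-; rewrite mulrC mulKf. Qed.

Lemma eq_by_sub_mul (l G1 G2 H1 H2 : F) : H1 = H2 -> G1 - G2 = l * (H1 - H2) -> G1 = G2.
Proof. by move=> ->; rewrite subrr mulr0 => /eqP; rewrite subr_eq0 => /eqP. Qed.

Ltac field_q := rewrite ?qnE ?exprS ?expr0; field;
  rewrite ?oppr_eq0 ?q_neq0 ?qq_neq1 ?oner_eq0 ?expf_eq0 ?(negbTE q_neq0) ?andbF //=.

(* Each identity is proved by induction on [w], together with the relations
   that the left derivatives of its two sides give rise to. *)
Lemma shc_xC_G w :
  [/\ shc w (lmul true (catser (- q) 0)) Gsum = Wnsum w,
      shc w (catser (- q) 0) Gsum + q * q * shc w (lmul true (catser (- q) 0)) Wpsum = Hsum w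
    & forall h, q ^+ h * shc w (catser (- q) h.+1) Gsum = - q * shc w (catser (- q) h) Wpsum].
Proof.
elim: w => [|c w [IH1 IH2 IH3]].
  by split => [||h] /=; rewrite /alt /=; ring.
case: c; split => [||h]; rewrite !shc_cons ?lder_alt ?lder_lmul ?alt_cons /=.
- by rewrite twist_xC shcZl.
- rewrite lderx_catser twist_catser shc0r !shcZl.
  by move: (IH3 0); rewrite expr0 mul1r => ->; field_q.
- rewrite lderx_catser twist_catser shc0r !shcZl.
  have ht := expf_neq0 h q_neq0.
  rewrite (eq_div_of_mul (expf_neq0 h.+1 q_neq0) (IH3 h.+1)); field_q.
- by rewrite shc0l shc0r addr0.
- rewrite ldery_catser0 shc0l shc0r twist_xC shc0l shcZl IH1; field_q.
- rewrite ldery_catserS shc0r twist_catser !shcZl.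
  case: h => [|h]; first by rewrite ldery_catser0 shc0l; field_q.
  have ht := expf_neq0 h q_neq0.
  have nq : - q != 0 by rewrite oppr_eq0.
  rewrite ldery_catserS shcZl (eq_div_of_mul nq (esym (IH3 h))); field_q.
Qed.

Lemma shc_G_xC w :
  [/\ shc w Gsum (lmul true (catser (- q^-1) 0)) = Wnsum w,
      shc w Wpsum (lmul true (catser (- q^-1) 0)) + shc w Gsum (catser (- q^-1) 0) = Hsum w
    & forall h,
        shc w Wpsum (catser (- q^-1) h) + q ^+ h.+1 * shc w Gsum (catser (- q^-1) h.+1) = 0].
Proof.
elim: w => [|c w [IH1 IH2 IH3]].
  by split => [||h] /=; rewrite /alt /=; ring.
case: c; split => [||h]; rewrite !shc_cons ?lder_alt ?lder_lmul ?alt_cons /=.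
- by rewrite twist_Gsum.
- rewrite twist_Wpsum twist_Gsum lderx_catser shc0l !shcZl !shcZr.
  apply: (eq_by_sub_mul (l := qn q 2 / q) (IH3 0)); field_q.
- rewrite twist_Wpsum lderx_catser twist_Gsum shc0l !shcZl !shcZr.
  have ht := expf_neq0 h q_neq0.
  apply: (eq_by_sub_mul (l := qn q h.+3 / q) (IH3 h.+1)); field_q.
- by rewrite twist_Gsum shc0l shc0r addr0.
- by rewrite twist_Wpsum twist_Gsum ldery_catser0 shc0l !shc0r IH1 !addr0.
- rewrite twist_Wpsum twist_Gsum ldery_catserS shc0l !shcZl !shcZr.
  case: h => [|h]; first by rewrite ldery_catser0 shc0r; field_q.
  have ht := expf_neq0 h q_neq0.
  rewrite ldery_catserS shcZr.
  apply: (eq_by_sub_mul (l := q * q * (- q^-1) * qn q h.+1) (IH3 h)); field_q.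
Qed.

Lemma shc_G_Cy w :
  [/\ shc w Gsum (rmul false (catser (- q) 0)) = Wpsum w
    & forall h, qn q h.+2 * q ^+ h * shc w Gsum (rmul false (catser (- q) h.+1))
                = - (qn q h.+1 * shc w Wpsum (rmul false (catser (- q) h)))].
Proof.
elim: w => [|c w [IH1 IH3]].
  by split => [|h] /=; rewrite /alt /rmul /=; ring.
case: c; split => [|h]; rewrite !shc_cons ?lder_alt ?alt_cons /=.
- rewrite twist_Gsum lderx_Cy shcZr.
  apply: (eq_by_sub_mul (l := 1) (IH3 0)); field_q.
- rewrite twist_Gsum lderx_Cy twist_Wpsum lderx_Cy shc0l !shcZl !shcZr.
  have ht := expf_neq0 h q_neq0.
  apply: (eq_by_sub_mul (l := qn q h.+2 / q) (IH3 h.+1)); field_q.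
- by rewrite twist_Gsum ldery_Cy0 shc0l shc_dirac_nilr add0r.
- rewrite twist_Gsum ldery_CyS twist_Wpsum shc0l !shcZl !shcZr.
  case: h => [|h]; first by rewrite ldery_Cy0 shc_dirac_nilr IH1; field_q.
  have ht := expf_neq0 h q_neq0.
  rewrite ldery_CyS shcZr.
  apply: (eq_by_sub_mul (l := qn q h.+2 * (q * q) * (- q)) (IH3 h)); field_q.
Qed.

Lemma shc_Cy_G w :
  [/\ shc w (rmul false (catser (- q^-1) 0)) Gsum = Wpsum w
    & forall h, qn q h.+2 * q ^+ h.+2 * shc w (rmul false (catser (- q^-1) h.+1)) Gsum
                + qn q h.+1 * shc w (rmul false (catser (- q^-1) h)) Wpsum = 0].
Proof.
elim: w => [|c w [IH1 IH3]].
  by split => [|h] /=; rewrite /alt /rmul /=; ring.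
case: c; split => [|h]; rewrite !shc_cons ?lder_alt ?alt_cons /=.
- rewrite lderx_Cy twist_Cy !shcZl.
  apply: (eq_by_sub_mul (l := (q * q)^-1) (IH3 0)); field_q.
- rewrite !lderx_Cy twist_Cy shc0r !shcZl.
  have ht := expf_neq0 h q_neq0.
  apply: (eq_by_sub_mul (l := qn q h.+2 / q) (IH3 h.+1)); field_q.
- by rewrite ldery_Cy0 twist_Cy shc0r shc_dirac_nill addr0.
- rewrite ldery_CyS !twist_Cy shc0r !shcZl.
  case: h => [|h]; first by rewrite ldery_Cy0 shc_dirac_nill IH1; field_q.
  have ht := expf_neq0 h q_neq0.
  rewrite ldery_CyS shcZl.
  apply: (eq_by_sub_mul (l := qn q h.+2 * (- q^-1)) (IH3 h)); field_q.
Qed.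

End GeneratingIdentities.

Section Grading.
Variable F : fieldType.
Variable q : F.

Definition hpart (k : nat) (f : series F) : series F :=
  fun u => if size u == k then f u else 0.
Definition size_homog (f : series F) (k : nat) := forall u, f u != 0 -> size u = k.

Lemma shc_local w (f1 f2 g1 g2 : series F) :
  (forall u, (size u <= size w)%N -> f1 u = f2 u) ->
  (forall u, (size u <= size w)%N -> g1 u = g2 u) ->
  shc q w f1 g1 = shc q w f2 g2.
Proof.
elim: w f1 f2 g1 g2 => [|c w IH] f1 f2 g1 g2 hf hg /=; first by rewrite hf // hg.
by congr (_ + _); apply: IH => u hu; rewrite /lder /twist ?hf ?hg //=; exact: leq_trans hu _.
Qed.

Lemma lder_hpartS c k f : lder c (hpart k.+1 f) = hpart k (lder c f).
Proof. by []. Qed.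

Lemma lder_hpart0 c f : lder c (hpart 0 f) = \0.
Proof. by []. Qed.

Lemma twist_hpart c k f : twist q c (hpart k f) = hpart k (twist q c f).
Proof.
apply: functional_extensionality => u; rewrite /twist /hpart.
by case: (size u == k); rewrite ?mulr0.
Qed.

Lemma size_homog_lder c f k : size_homog f k -> size_homog (lder c f) k.-1.
Proof. by move=> hf u /hf /= <-. Qed.

Lemma size_homog_twist c f k : size_homog f k -> size_homog (twist q c f) k.
Proof.
move=> hf u; rewrite /twist => nz; apply: hf.
by apply: contraNneq nz => ->; rewrite mulr0.
Qed.

Lemma lder_size_homog0 c f : size_homog f 0 -> lder c f = \0.
Proof.
move=> hf; apply: functional_extensionality => u.
by apply/eqP; apply: contraT => /hf.
Qed.

Lemma size_homog_nil f k : size_homog f k.+1 -> f [::] = 0.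
Proof. by move=> hf; apply/eqP; apply: contraT => /hf. Qed.

Lemma shc_size_homogl w f g k : size_homog f k ->
  shc q w f g = if (k <= size w)%N then shc q w f (hpart (size w - k) g) else 0.
Proof.
elim: w f g k => [|c w IH] f g [|k] hf /=.
- by [].
- by rewrite (size_homog_nil hf) mul0r.
- rewrite (lder_size_homog0 c hf) !shc0l !add0r (IH _ _ _ (size_homog_twist (c := c) hf)) /=.
  by rewrite !subn0 lder_hpartS.
rewrite (IH _ _ _ (size_homog_lder (c := c) hf)) (IH _ _ _ (size_homog_twist (c := c) hf)).
rewrite /= ltnS subSS.
case: (ltngtP k (size w)) => h.
- by rewrite -(subnSK h) lder_hpartS.
- by rewrite addr0.
- by rewrite h subnn lder_hpart0 shc0r.
Qed.

Lemma shc_size_homogr w f g k : size_homog g k ->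
  shc q w f g = if (k <= size w)%N then shc q w (hpart (size w - k) f) g else 0.
Proof.
elim: w f g k => [|c w IH] f g [|k] hg /=.
- by [].
- by rewrite (size_homog_nil hg) mulr0.
- rewrite (lder_size_homog0 c hg) !shc0r !addr0 (IH _ _ _ hg) /=.
  by rewrite !subn0 lder_hpartS.
rewrite (IH _ _ _ hg) (IH _ _ _ (size_homog_lder (c := c) hg)) /= ltnS subSS twist_hpart.
case: (ltngtP k (size w)) => h.
- by rewrite -(subnSK h) lder_hpartS.
- by rewrite addr0.
- by rewrite h subnn lder_hpart0 shc0l.
Qed.

Lemma size_homog_dirac u : size_homog (dirac F u) (size u).
Proof. by move=> z; rewrite /dirac; case: ifP => [/eqP <- | _]; rewrite ?eqxx. Qed.

Lemma size_homog_lmul a (f : series F) k : size_homog f k -> size_homog (lmul a f) k.+1.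
Proof. by move=> hf [|c u] /=; [rewrite eqxx | case: (c == a) => [/hf -> | ]; rewrite ?eqxx]. Qed.

Lemma size_homog_rmul b (f : series F) k : size_homog f k -> size_homog (rmul b f) k.+1.
Proof.
move=> hf u; rewrite /rmul; case/lastP: u => [|u c]; first by rewrite eqxx.
by rewrite rev_rcons revK size_rcons; case: (c == b) => [/hf -> | ]; rewrite ?eqxx.
Qed.

Lemma hpart_size_homog_neq (f : series F) k l : size_homog f l -> k != l -> hpart k f = \0.
Proof.
move=> hf kl; apply: functional_extensionality => u; rewrite /hpart.
case: eqP => // su; apply/eqP; apply: contraT => /hf su'.
by move: kl; rewrite -su su' eqxx.
Qed.

Lemma shc_size_homog_eq0 w (f g : series F) k l :
  size_homog f k -> size_homog g l -> (k + l != size w)%N -> shc q w f g = 0.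
Proof.
move=> hf hg kl; rewrite (shc_size_homogl _ _ hf); case: ifP => // le.
by rewrite (hpart_size_homog_neq hg) ?shc0r //; apply: contra kl => /eqP <-; rewrite subnKC.
Qed.

Lemma sum_hpart_odd f n u : (forall u, f u != 0 -> odd (size u)) ->
  (size u <= (2 * n).+1)%N -> f u = \sum_(i < n.+1) hpart (2 * i).+1 f u.
Proof.
move=> hodd hs; rewrite /hpart.
have [->|nz] := eqVneq (f u) 0; first by rewrite big1 // => i _; case: ifP.
have [j hj] : exists j, size u = (2 * j).+1.
  by exists (size u)./2; rewrite -[LHS]odd_double_half (hodd u nz) add1n -muln2 mulnC.
have hjn : (j < n.+1)%N by lia.
rewrite (bigD1 (Ordinal hjn)) //= hj eqxx big1 ?addr0 // => i ne.
case: eqP => // E; case/eqP: ne; apply: val_inj => /=; lia.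
Qed.

End Grading.

Lemma mem_words m u : (u \in words m) = (size u == m).
Proof.
elim: m u => [|m IH] [|c u] //=; rewrite cats0 mem_cat.
  by apply/negbTE; rewrite negb_or; apply/andP; split; apply/mapP => -[].
rewrite eqSS -IH; case: c;
  rewrite (mem_map (fun a b (e : _ :: a = _ :: b) => congr1 behead e));
  by case: (u \in _); rewrite ?orbT ?orbF //=; apply/negbTE/mapP => -[].
Qed.

Lemma uniq_words m : uniq (words m).
Proof.
elim: m => [|m IH] //=; rewrite cats0 cat_uniq !map_inj_uniq ?IH //; try by move=> a b [].
by rewrite andbT /=; apply/hasPn => u /mapP [v _ ->]; apply/negP => /mapP [].
Qed.

Section CatalanCoefficients.
Variable F : fieldType.
Variable q : F.

Lemma vcoef_Cn i u :
  vcoef (Cn q i) u = if (size u == 2 * i)%N && catalan u then catcoef q u else 0.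
Proof.
rewrite /vcoef /Cn big_map big_filter big_mkcond /=.
case Hu: (u \in words (2 * i)).
  rewrite (bigD1_seq u Hu (uniq_words _)) /= eqxx -mem_words Hu /= big1 ?addr0.
    by case: (catalan u).
  by move=> v /negbTE ->; case: (catalan v).
rewrite -mem_words Hu /= big_seq big1 // => v vin.
by rewrite (_ : v == u = false) ?if_same //; apply/negbTE; apply: contraFneq Hu => <-.
Qed.

Lemma size_homog_Cn i : size_homog (vcoef (Cn q i)) (2 * i).
Proof. by move=> u; rewrite vcoef_Cn; case: ifP => [/andP [/eqP -> _] | _]; rewrite ?eqxx. Qed.

Definition dyck_from (H : int) (u : word) : bool :=
  all (fun j => 0 <= H + psum (take j u)) (iota 0 (size u)) && (H + psum u == 0).

Lemma dyck_from_cons H a u : dyck_from H (a :: u) = (0 <= H) && dyck_from (H + lbar a) u.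
Proof.
rewrite /dyck_from /= psum_nil addr0 -andbA psum_cons addrA; congr (_ && (_ && _)).
rewrite -(addn0 1%N) iotaDl all_map; apply: eq_all => j /=.
by rewrite psum_cons addrA.
Qed.

Lemma dyck_from_neg H u : H < 0 -> dyck_from H u = false.
Proof.
move=> hn; case: u => [|a u]; last by rewrite dyck_from_cons leNgt hn.
by rewrite /dyck_from /= psum_nil addr0; apply/negbTE/ltr0_neq0.
Qed.

Lemma catalan_dyck_from u : catalan u = dyck_from 0 u.
Proof.
rewrite /catalan /dyck_from add0r; congr (_ && _); case: u => [|a u] //=.
by rewrite psum_nil lexx; apply: eq_all => j; rewrite add0r.
Qed.

Lemma prod_qint_cons H a u :
  \prod_(j < size (a :: u)) qint q (1 + H + psum (take j.+1 (a :: u))) =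
  qint q (1 + H + lbar a) * \prod_(j < size u) qint q (1 + (H + lbar a) + psum (take j.+1 u)).
Proof.
rewrite big_ord_recl /= take0 psum_cons psum_nil addr0; congr (_ * _).
by apply: eq_bigr => j _; rewrite /= psum_cons !addrA.
Qed.

Lemma catserE s h u : catser q s h u =
  if dyck_from h u
  then s ^+ count negb u * \prod_(j < size u) qint q (1 + h%:Z + psum (take j.+1 u))
  else 0.
Proof.
elim: u h => [|a u IH] h.
  by rewrite /dyck_from /= psum_nil addr0 big_ord0 expr0 mulr1; case: h.
rewrite dyck_from_cons prod_qint_cons le0z_nat /=; case: a => /=.
  have -> : h%:Z + lbar true = h.+1 by rewrite /lbar; lia.
  have -> : 1 + h%:Z + lbar true = h.+2 by rewrite /lbar; lia.
  by rewrite IH add0n; case: dyck_from; rewrite ?mulr0 // mulrCA.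
case: h => [|h]; first by rewrite dyck_from_neg.
have -> : h.+1%:Z - 1 = h by lia.
have -> : 1 + h.+1%:Z - 1 = h.+1 by lia.
by rewrite IH; case: dyck_from; rewrite ?mulr0 // /qn exprS; ring.
Qed.

Lemma psum_count u : psum u = (count id u)%:Z - (count negb u)%:Z.
Proof.
elim: u => [|a u IH]; first by rewrite psum_nil.
by rewrite psum_cons IH; case: a => /=; rewrite /lbar; lia.
Qed.

Lemma count_id_negb u : (count id u + count negb u)%N = size u.
Proof. by elim: u => [|a u IH] //=; case: a => /=; lia. Qed.

Lemma qint1 : q != 0 -> q * q - 1 != 0 -> qint q 1 = 1.
Proof.
move=> q0 qq1; rewrite /qint expr1z (_ : (- 1 : int) = - (1%N%:Z)) // -exprnN expr1.
by apply: divff; rewrite (_ : q - q^-1 = (q * q - 1) / q) ?mulf_neq0 ?invr_neq0 //; field.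
Qed.

Lemma catser0_Cn s i u : q != 0 -> q * q - 1 != 0 -> size u = (2 * i)%N ->
  catser q s 0 u = s ^+ i * vcoef (Cn q i) u.
Proof.
move=> q0 qq1 su; rewrite catserE vcoef_Cn -catalan_dyck_from su eqxx /=.
case Ec: (catalan u); last by rewrite mulr0.
rewrite /catcoef big_ord_recl take0 psum_nil addr0 qint1 // mul1r su.
congr (_ ^+ _ * _); move: Ec; rewrite /catalan => /andP [_ /eqP].
by rewrite psum_count; have := count_id_negb u; rewrite su; lia.
Qed.

Lemma catser_odd_size s h u : catser q s h u != 0 -> odd (size u) = odd h.
Proof.
elim: u h => [|[] u IH] h /=; first by case: h => //=; rewrite eqxx.
  move=> nz; rewrite (IH h.+1) ?negbK //.
  by apply: contraNneq nz => ->; rewrite mulr0.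
case: h => [|h]; first by rewrite eqxx.
move=> nz; rewrite (IH h) //.
by apply: contraNneq nz => ->; rewrite mulr0.
Qed.

End CatalanCoefficients.

Section Assembly.
Variable F : fieldType.
Variable q : F.

Local Notation Gsum := (alt F true false).

Lemma alternatingE a u : alternating a u = (u == mkseq (fun i => a (+) odd i) (size u)).
Proof.
elim: u a => [|c u IH] a //=.
rewrite /mkseq /= (iotaDl 1 0) -map_comp eqseq_cons IH addbF.
suff -> : (fun i => a (+) odd i) \o addn 1 = (fun i => ~~ a (+) odd i) by [].
by apply: functional_extensionality => i /=; rewrite addbN addNb.
Qed.

Lemma altE a p u :
  alt F a p u = if odd (size u) == p then dirac F (mkseq (fun i => a (+) odd i) (size u)) u else 0.
Proof. by rewrite /alt alternatingE /dirac eq_sym; case: (_ == _); case: (_ == _). Qed.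

Lemma Gt_size m : size (Gt m) = (2 * m)%N.
Proof. by rewrite size_mkseq. Qed.

Lemma hpart_G m : hpart (2 * m) Gsum = dirac F (Gt m).
Proof.
apply: functional_extensionality => u; rewrite /hpart altE.
case: eqP => [->|ne]; first by rewrite oddM andFb.
by rewrite /dirac; case: eqP => // E; case: ne; rewrite -E Gt_size.
Qed.

Lemma alt_Wneg n w : size w = (2 * n).+1 -> alt F true true w = dirac F (Wneg n) w.
Proof. by move=> sw; rewrite altE sw /= oddM andFb. Qed.

Lemma alt_Wpos n w : size w = (2 * n).+1 -> alt F false true w = dirac F (Wpos n) w.
Proof. by move=> sw; rewrite altE sw /= oddM andFb. Qed.

(* On words of length 2n+1 the odd component of degree 2i+1 of [P] only
   meets the component G~_{n-i} of [Gsum]. *)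
Lemma dirac_sum_shc_Gl (P : series F) (C : nat -> series F) (c : nat -> F) T n w :
  (forall i, hpart (2 * i).+1 P = scalef (c i) (C i)) ->
  (forall i, size_homog (C i) (2 * i).+1) ->
  (forall u, P u != 0 -> odd (size u)) ->
  (forall w, size w = (2 * n).+1 -> shc q w P Gsum = dirac F T w) ->
  size T = (2 * n).+1 ->
  dirac F T w = \sum_(i < n.+1) c i * shc q w (C i) (dirac F (Gt (n - i))).
Proof.
move=> hP hC hodd hT sT.
have [sw|sw] := eqVneq (size w) (2 * n).+1.
  rewrite -hT // (shc_local q (g2 := Gsum)
                   (f2 := fun u => \sum_(i < n.+1) hpart (2 * i).+1 P u)) //;
    last by move=> u; rewrite sw; apply: sum_hpart_odd.
  rewrite shc_suml; apply: eq_bigr => i _.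
  have lti := ltn_ord i.
  rewrite hP shcZl (shc_size_homogl _ _ _ (hC i)) sw ifT; last lia.
  by rewrite (_ : ((2 * n).+1 - (2 * i).+1 = 2 * (n - i))%N) ?hpart_G //; lia.
rewrite /dirac (_ : T == w = false); last by apply: contraNF sw => /eqP <-; rewrite sT.
rewrite big1 // => i _; have lti := ltn_ord i.
by rewrite (shc_size_homog_eq0 q (hC i) (@size_homog_dirac _ _)) ?mulr0 // Gt_size; lia.
Qed.

Lemma dirac_sum_shc_Gr (P : series F) (C : nat -> series F) (c : nat -> F) T n w :
  (forall i, hpart (2 * i).+1 P = scalef (c i) (C i)) ->
  (forall i, size_homog (C i) (2 * i).+1) ->
  (forall u, P u != 0 -> odd (size u)) ->
  (forall w, size w = (2 * n).+1 -> shc q w Gsum P = dirac F T w) ->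
  size T = (2 * n).+1 ->
  dirac F T w = \sum_(i < n.+1) c i * shc q w (dirac F (Gt (n - i))) (C i).
Proof.
move=> hP hC hodd hT sT.
have [sw|sw] := eqVneq (size w) (2 * n).+1.
  rewrite -hT // (shc_local q (f2 := Gsum)
                   (g2 := fun u => \sum_(i < n.+1) hpart (2 * i).+1 P u)) //;
    last by move=> u; rewrite sw; apply: sum_hpart_odd.
  rewrite shc_sumr; apply: eq_bigr => i _.
  have lti := ltn_ord i.
  rewrite hP shcZr (shc_size_homogr _ _ _ (hC i)) sw ifT; last lia.
  by rewrite (_ : ((2 * n).+1 - (2 * i).+1 = 2 * (n - i))%N) ?hpart_G //; lia.
rewrite /dirac (_ : T == w = false); last by apply: contraNF sw => /eqP <-; rewrite sT.
rewrite big1 // => i _; have lti := ltn_ord i.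
by rewrite (shc_size_homog_eq0 q (@size_homog_dirac _ _) (hC i)) ?mulr0 // Gt_size; lia.
Qed.

End Assembly.

Section Components.
Variable F : fieldType.
Variable q : F.
Hypothesis q_neq0 : q != 0.
Hypothesis qq_neq1 : q * q - 1 != 0.

Lemma hpart_xC s i :
  hpart (2 * i).+1 (lmul true (catser q s 0)) = scalef (s ^+ i) (lmul true (vcoef (Cn q i))).
Proof.
apply: functional_extensionality => -[|a u]; rewrite /hpart /scalef /= ?mulr0 // eqSS.
case: eqP => [su|su]; case: (a == true); rewrite ?mulr0 //; first exact: catser0_Cn.
by rewrite vcoef_Cn (introF eqP su) mulr0.
Qed.

Lemma hpart_Cy s i :
  hpart (2 * i).+1 (rmul false (catser q s 0)) = scalef (s ^+ i) (rmul false (vcoef (Cn q i))).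
Proof.
apply: functional_extensionality => u; rewrite /hpart /scalef /rmul.
case/lastP: u => [|u c]; rewrite ?mulr0 // rev_rcons revK size_rcons eqSS.
case: eqP => [su|su]; case: (c == false); rewrite ?mulr0 //; first exact: catser0_Cn.
by rewrite vcoef_Cn (introF eqP su) mulr0.
Qed.

Lemma odd_size_xC s u : lmul true (catser q s 0) u != 0 -> odd (size u).
Proof. by case: u => [|[] u] /=; rewrite ?eqxx // => /catser_odd_size ->. Qed.

Lemma odd_size_Cy s u : rmul false (catser q s 0) u != 0 -> odd (size u).
Proof.
rewrite /rmul; case/lastP: u => [|u [] ]; rewrite ?rev_rcons ?revK ?eqxx //.
by rewrite size_rcons /= => /catser_odd_size ->.
Qed.

Lemma Wneg_xC_G n w : dirac F (Wneg n) w =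
  \sum_(i < n.+1) (-1) ^+ i * q ^+ i * shc q w (lmul true (vcoef (Cn q i))) (dirac F (Gt (n - i))).
Proof.
apply: (dirac_sum_shc_Gl (P := lmul true (catser q (- q) 0))
  (C := fun i => lmul true (vcoef (Cn q i))) (c := fun i => (-1) ^+ i * q ^+ i)).
- by move=> i; rewrite hpart_xC [(- q) ^+ _]exprNn.
- by move=> i; apply/size_homog_lmul/size_homog_Cn.
- exact: odd_size_xC.
- by move=> z sz; case: (shc_xC_G q_neq0 qq_neq1 z) => -> _ _; exact: alt_Wneg.
- by rewrite size_mkseq.
Qed.

Lemma Wneg_G_xC n w : dirac F (Wneg n) w =
  \sum_(i < n.+1) (-1) ^+ i * q ^- i * shc q w (dirac F (Gt (n - i))) (lmul true (vcoef (Cn q i))).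
Proof.
apply: (dirac_sum_shc_Gr (P := lmul true (catser q (- q^-1) 0))
  (C := fun i => lmul true (vcoef (Cn q i))) (c := fun i => (-1) ^+ i * q ^- i)).
- by move=> i; rewrite hpart_xC [(- q^-1) ^+ _]exprNn exprVn.
- by move=> i; apply/size_homog_lmul/size_homog_Cn.
- exact: odd_size_xC.
- by move=> z sz; case: (shc_G_xC q_neq0 qq_neq1 z) => -> _ _; exact: alt_Wneg.
- by rewrite size_mkseq.
Qed.

Lemma Wpos_G_Cy n w : dirac F (Wpos n) w =
  \sum_(i < n.+1) (-1) ^+ i * q ^+ i * shc q w (dirac F (Gt (n - i))) (rmul false (vcoef (Cn q i))).
Proof.
apply: (dirac_sum_shc_Gr (P := rmul false (catser q (- q) 0))
  (C := fun i => rmul false (vcoef (Cn q i))) (c := fun i => (-1) ^+ i * q ^+ i)).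
- by move=> i; rewrite hpart_Cy [(- q) ^+ _]exprNn.
- by move=> i; apply/size_homog_rmul/size_homog_Cn.
- exact: odd_size_Cy.
- by move=> z sz; case: (shc_G_Cy q_neq0 qq_neq1 z) => -> _; exact: alt_Wpos.
- by rewrite size_mkseq.
Qed.

Lemma Wpos_Cy_G n w : dirac F (Wpos n) w =
  \sum_(i < n.+1) (-1) ^+ i * q ^- i * shc q w (rmul false (vcoef (Cn q i))) (dirac F (Gt (n - i))).
Proof.
apply: (dirac_sum_shc_Gl (P := rmul false (catser q (- q^-1) 0))
  (C := fun i => rmul false (vcoef (Cn q i))) (c := fun i => (-1) ^+ i * q ^- i)).
- by move=> i; rewrite hpart_Cy [(- q^-1) ^+ _]exprNn exprVn.
- by move=> i; apply/size_homog_rmul/size_homog_Cn.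
- exact: odd_size_Cy.
- by move=> z sz; case: (shc_Cy_G q_neq0 qq_neq1 z) => -> _; exact: alt_Wpos.
- by rewrite size_mkseq.
Qed.

End Components.

Unset Implicit Arguments.

Theorem theorem11p5 (F : fieldType) (q : F) (hq0 : q != 0)
    (hq : forall m : nat, (0 < m)%N -> q ^+ m != 1) (n : nat) :
  let x : V F := vword F [:: true] in
  let y : V F := vword F [:: false] in
  let C := Cn q in
  let G k := vword F (Gt k) in
  [/\ veq (vword F (Wneg n))
          (vsum n.+1 (fun i => vscale ((-1) ^+ i * q ^+ i)
                                 (vshuffle q (vcat x (C i)) (G (n - i)%N)))),
      veq (vword F (Wneg n))
          (vsum n.+1 (fun i => vscale ((-1) ^+ i * q ^- i)
                                 (vshuffle q (G (n - i)%N) (vcat x (C i))))),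
      veq (vword F (Wpos n))
          (vsum n.+1 (fun i => vscale ((-1) ^+ i * q ^+ i)
                                 (vshuffle q (G (n - i)%N) (vcat (C i) y))))
    & veq (vword F (Wpos n))
          (vsum n.+1 (fun i => vscale ((-1) ^+ i * q ^- i)
                                 (vshuffle q (vcat (C i) y) (G (n - i)%N))))].
Proof.
have qq_neq1 : q * q - 1 != 0.
  by move: (hq 2%N isT); rewrite expr2; apply: contra; rewrite subr_eq0.
split=> w; rewrite vcoef_vword vcoef_vsum.
- rewrite (Wneg_xC_G hq0 qq_neq1); apply: eq_bigr => i _.
  by rewrite vcoef_scale vcoef_shuffle vcoef_letter_vcat !vcoef_vword.
- rewrite (Wneg_G_xC hq0 qq_neq1); apply: eq_bigr => i _.
  by rewrite vcoef_scale vcoef_shuffle vcoef_letter_vcat !vcoef_vword.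
- rewrite (Wpos_G_Cy hq0 qq_neq1); apply: eq_bigr => i _.
  by rewrite vcoef_scale vcoef_shuffle vcoef_vcat_letter !vcoef_vword.
- rewrite (Wpos_Cy_G hq0 qq_neq1); apply: eq_bigr => i _.
  by rewrite vcoef_scale vcoef_shuffle vcoef_vcat_letter !vcoef_vword.
Qed.
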